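(* For any connected graphs $G$ and $H$, $v_s(G)\,v_s(H) \le Z(G \Box H)$.
   Context: A strong support vertex is a vertex adjacent to at least two leaves; $v_s(G)$ is the number of strong support vertices of $G$. Zero forcing: starting from a set $Z \subseteq V(G)$ of observed vertices, repeatedly any vertex that is the only unobserved neighbor of some observed vertex becomes observed; $Z$ is a zero forcing set if eventually all vertices are observed, and $Z(G)$ is the minimum size of a zero forcing set. $G\Box H$ is the Cartesian product: vertex set $V(G)\times V(H)$, with $(g_1,h_1)\sim(g_2,h_2)$ iff ($g_1=g_2$ and $h_1h_2\in E(H)$) or ($h_1=h_2$ and $g_1g_2\in E(G)$). *)

From mathcomp Require Import all_boot.
Set Implicit Arguments. Unset Strict Implicit. Unset Printing Implicit Defensive.

Definition simple_graph (T : finType) (e : rel T) : Prop :=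
  symmetric e /\ irreflexive e.

Definition connected_graph (T : finType) (e : rel T) : Prop :=
  forall x y : T, connect e x y.

Definition nbhd (T : finType) (e : rel T) (v : T) : {set T} := [set w | e v w].

Definition deg (T : finType) (e : rel T) (v : T) : nat := #|nbhd e v|.

Definition leaf (T : finType) (e : rel T) (v : T) : bool := deg e v == 1.

Definition strong_support (T : finType) (e : rel T) (v : T) : bool :=
  1 < #|[set w in nbhd e v | leaf e w]|.

Definition vs (T : finType) (e : rel T) : nat := #|[set v | strong_support e v]|.

Definition force_step (T : finType) (e : rel T) (S : {set T}) : {set T} :=
  S :|: [set w | [exists v in S, (w \in nbhd e v) && (nbhd e v :\: S == [set w])]].

(* The final set of observed vertices (the process stabilises after at
   most #|T| rounds). *)
Definition zf_closure (T : finType) (e : rel T) (Z : {set T}) : {set T} :=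
  iter #|T| (force_step e) Z.

Definition zero_forcing_set (T : finType) (e : rel T) (Z : {set T}) : bool :=
  zf_closure e Z == [set: T].

(* Z(G): the minimum size of a zero forcing set ([set: T] is one). *)
Definition zf_number (T : finType) (e : rel T) : nat :=
  #|[arg min_(Z < [set: T] | zero_forcing_set e Z) #|Z|]|.

Definition cart_prod (T1 T2 : finType) (e1 : rel T1) (e2 : rel T2) : rel (T1 * T2) :=
  fun x y => ((x.1 == y.1) && e2 x.2 y.2) || ((x.2 == y.2) && e1 x.1 y.1).

From mathcomp Require Import all_boot.
Set Implicit Arguments. Unset Strict Implicit. Unset Printing Implicit Defensive.

(* A fort is a nonempty vertex set F such that no vertex has exactly one
   neighbour in F.  Forcing never enters a fort from outside, so every zero
   forcing set meets every fort, and Z(G) is at least the number of pairwise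
   disjoint forts.  In G \Box H, if u is a strong support vertex of G and v
   one of H, the product L(u) x L(v) of their leaf sets is a fort: a
   neighbour of (l, m) in it is (u, m) or (l, v), which is also adjacent to
   (u, m') resp. (l', v) for another leaf.  These squares are disjoint for
   distinct (u, v) because a leaf has a single neighbour. *)

Section Forts.
Variables (T : finType) (e : rel T).

Definition fort (F : {set T}) : Prop :=
  F != set0 /\ forall v, #|nbhd e v :&: F| != 1.

Lemma fort_disjoint_force_step (F S : {set T}) :
  fort F -> [disjoint F & S] -> [disjoint F & force_step e S].
Proof.
move=> [_ Fnot1] dFS; rewrite disjoint_subset; apply/subsetP => w wF.
rewrite !inE (disjointFr dFS wF) /=; apply/existsP => -[v /andP [vS]].
case/andP=> wNv /eqP NvS.
have NvF : nbhd e v :&: F = [set w].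
  apply/eqP; rewrite eqEsubset sub1set in_setI wNv wF; apply/andP; split => //.
  apply/subsetP => x /setIP [xNv xF].
  by rewrite -NvS in_setD xNv (disjointFr dFS xF).
by have := Fnot1 v; rewrite NvF cards1.
Qed.

Lemma zero_forcing_set_meets_fort (Z F : {set T}) :
  zero_forcing_set e Z -> fort F -> ~~ [disjoint F & Z].
Proof.
move=> /eqP ZT FF; apply/negP => dFZ.
have dF_closure : [disjoint F & zf_closure e Z].
  by rewrite /zf_closure; elim: #|T| => //= n IHn; apply: fort_disjoint_force_step.
have [x xF] := set0Pn _ FF.1.
by move: (disjointFr dF_closure xF); rewrite ZT inE.
Qed.

Lemma zero_forcing_set_setT : zero_forcing_set e [set: T].
Proof.
rewrite /zero_forcing_set /zf_closure; apply/eqP.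
by elim: #|T| => //= n ->; apply/eqP; rewrite eqEsubset subsetT subsetUl.
Qed.

Lemma disjoint_forts_le_zf_number (I : finType) (P : {set I}) (F : I -> {set T}) :
  (forall i, i \in P -> fort (F i)) ->
  {in P &, forall i j, ~~ [disjoint F i & F j] -> i = j} ->
  #|P| <= zf_number e.
Proof.
move=> Pfort Finj; rewrite /zf_number.
case: arg_minnP; first exact: zero_forcing_set_setT.
move=> Z Zzf _; pose g i := [pick z in F i :&: Z].
have gP i : i \in P -> exists2 z, g i = Some z & z \in F i :&: Z.
  move=> iP; rewrite /g; case: pickP => [z zFZ | noFZ]; first by exists z.
  have := zero_forcing_set_meets_fort Zzf (Pfort i iP).
  by rewrite -setI_eq0 => /set0Pn [z]; rewrite noFZ.
rewrite -(card_in_imset (f := g)).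
  rewrite -(card_imset Z (@Some_inj _)).
  apply/subset_leq_card/subsetP => _ /imsetP [i /gP [z -> /setIP [_ zZ]] ->].
  exact: imset_f.
move=> i j iP jP; have [z gi /setIP [zFi _]] := gP i iP.
have [z' gj /setIP [zFj _]] := gP j jP.
rewrite gi gj => -[zz']; apply: Finj => //.
by apply/negP => /disjointFr/(_ zFi); rewrite zz' zFj.
Qed.

End Forts.

Definition leaves_at (T : finType) (e : rel T) (u : T) : {set T} :=
  [set w in nbhd e u | leaf e w].

Lemma nbhd_leaves_at (T : finType) (e : rel T) u w :
  symmetric e -> w \in leaves_at e u -> nbhd e w = [set u].
Proof.
move=> sym; rewrite !inE => /andP [uw /cards1P [x Nw]].
have : u \in nbhd e w by rewrite inE sym.
by rewrite Nw inE => /eqP ->.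
Qed.

Lemma exists_other (T : finType) (A : {set T}) x :
  1 < #|A| -> exists2 y, y \in A & y != x.
Proof.
move=> /card_gt1P [y [z [yA zA yz]]].
by case: (eqVneq y x) => [yx | ]; [exists z; rewrite // -yx eq_sym | exists y].
Qed.

Section LeafSquares.
Variables (T1 T2 : finType) (e1 : rel T1) (e2 : rel T2).
Hypotheses (sym1 : symmetric e1) (sym2 : symmetric e2).

Definition leaf_square (p : T1 * T2) : {set T1 * T2} :=
  setX (leaves_at e1 p.1) (leaves_at e2 p.2).

Lemma leaf_square_fort u v :
  strong_support e1 u -> strong_support e2 v ->
  fort (cart_prod e1 e2) (leaf_square (u, v)).
Proof.
move=> L1 L2; split.
  have [l lL _] := exists_other u L1; have [m mL _] := exists_other v L2.
  by apply/set0Pn; exists (l, m); rewrite in_setX lL mL.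
move=> x; apply/cards1P => -[[l m] Nx].
have /setIP [] : (l, m) \in nbhd (cart_prod e1 e2) x :&: leaf_square (u, v).
  by rewrite Nx set11.
rewrite in_setX inE /cart_prod /= => /orP [] /andP [/eqP x_eq x_adj] /andP [lL mL].
- have xv : x.2 = v.
    by apply/set1P; rewrite -(nbhd_leaves_at sym2 mL) inE sym2.
  have [m' m'L m'm] := exists_other m L2.
  have : (l, m') \in nbhd (cart_prod e1 e2) x :&: leaf_square (u, v).
    have /setIdP [vm' _] := m'L; rewrite inE in vm'.
    by rewrite in_setI in_setX lL m'L andbT inE /cart_prod /= x_eq eqxx xv vm'.
  by rewrite Nx inE xpair_eqE eqxx (negbTE m'm).
- have xu : x.1 = u.
    by apply/set1P; rewrite -(nbhd_leaves_at sym1 lL) inE sym1.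
  have [l' l'L l'l] := exists_other l L1.
  have : (l', m) \in nbhd (cart_prod e1 e2) x :&: leaf_square (u, v).
    have /setIdP [ul' _] := l'L; rewrite inE in ul'.
    by rewrite in_setI in_setX l'L mL andbT inE /cart_prod /= x_eq eqxx xu ul' orbT.
  by rewrite Nx inE xpair_eqE eqxx andbT (negbTE l'l).
Qed.

Lemma leaf_square_inj p q :
  ~~ [disjoint leaf_square p & leaf_square q] -> p = q.
Proof.
case: p q => [u v] [u' v'] /pred0Pn [[l m] /andP [/=]].
rewrite !in_setX /= => /andP [lu mv] /andP [lu' mv'].
move: (nbhd_leaves_at sym1 lu) (nbhd_leaves_at sym2 mv).
by rewrite (nbhd_leaves_at sym1 lu') (nbhd_leaves_at sym2 mv') => /set1_inj <- /set1_inj <-.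
Qed.

End LeafSquares.

Theorem corollary3p6 (T1 T2 : finType) (e1 : rel T1) (e2 : rel T2) :
  simple_graph e1 -> simple_graph e2 ->
  connected_graph e1 -> connected_graph e2 ->
  vs e1 * vs e2 <= zf_number (cart_prod e1 e2).
Proof.
move=> [sym1 _] [sym2 _] _ _.
rewrite /vs -cardsX.
apply: (disjoint_forts_le_zf_number (F := leaf_square e1 e2)).
  by case=> u v; rewrite in_setX !inE => /andP []; exact: leaf_square_fort.
by move=> p q _ _; apply: leaf_square_inj.
Qed.
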